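(* For every integer $d\ge2$ there are infinitely many $d$-degenerate graphs $H$ with $\alpha_d(H)<\mathrm{flap}_d(H)$.
   Context: Graphs are finite and simple. A graph is $d$-degenerate if every subgraph has minimum degree at most $d$. $\alpha_d(H)$ is the maximum size of a set of pairwise non-adjacent vertices of $H$ each of degree at most $d$ in $H$. A separation of $H$ is an ordered pair $(A,B)$ of subsets of $V(H)$ with $A\cup B=V(H)$ and no edge between $A\setminus B$ and $B\setminus A$; its order is $|A\cap B|$. A collection $\mathcal C$ of separations is independent if $A\setminus B\ne\emptyset$ for each $(A,B)\in\mathcal C$ and $A\subseteq D$, $C\subseteq B$ for all distinct $(A,B),(C,D)\in\mathcal C$. $\mathrm{flap}_d(H)$ is the maximum size of an independent collection of separations of $H$ each of order at most $d$. *)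

(* A finite simple graph is a finType T (vertices) with a
   symmetric irreflexive edge relation e : rel T. *)
From mathcomp Require Import all_boot all_order.
Set Implicit Arguments. Unset Strict Implicit. Unset Printing Implicit Defensive.

Section Graphs.
Variable T : finType.

Definition simple_graph (e : rel T) : Prop := symmetric e /\ irreflexive e.

Definition deg_in (f : rel T) (S : {set T}) (v : T) : nat :=
  #|[set u in S | f v u]|.

Definition deg (e : rel T) (v : T) : nat := deg_in e [set: T] v.

Definition degenerate (e : rel T) (d : nat) : Prop :=
  forall (S : {set T}) (f : rel T),
    symmetric f -> (forall x y, f x y -> e x y) -> S != set0 ->
    exists2 v, v \in S & deg_in f S v <= d.

Definition low_indep (e : rel T) (d : nat) (I : {set T}) : bool :=
  [forall x in I, forall y in I, ~~ e x y] && [forall x in I, deg e x <= d].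

Definition alpha_d (e : rel T) (d : nat) : nat :=
  \max_(I : {set T} | low_indep e d I) #|I|.

Definition separation (e : rel T) (s : {set T} * {set T}) : bool :=
  (s.1 :|: s.2 == [set: T]) &&
  [forall x in s.1 :\: s.2, forall y in s.2 :\: s.1, ~~ e x y].

Definition sep_order (s : {set T} * {set T}) : nat := #|s.1 :&: s.2|.

Definition independent_seps (C : {set {set T} * {set T}}) : bool :=
  [forall s in C, s.1 :\: s.2 != set0] &&
  [forall s in C, forall t in C,
     (s != t) ==> (s.1 \subset t.2) && (t.1 \subset s.2)].

Definition flap_coll (e : rel T) (d : nat) (C : {set {set T} * {set T}}) : bool :=
  [forall s in C, separation e s && (sep_order s <= d)] && independent_seps C.

Definition flap_d (e : rel T) (d : nat) : nat :=
  \max_(C : {set {set T} * {set T}} | flap_coll e d C) #|C|.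

End Graphs.

From mathcomp Require Import all_boot all_order.
From mathcomp Require Import zify.

(* For d >= 2 and N >= 2d+3 consider the graph on {0,...,N-1}
   obtained from the d-th power of the path 0-1-...-(N-1) by deleting the
   edge {d, d+1} and adding the edge {0, d+1}.
   - Every vertex has at most d neighbours below it (vertex d+1 lost the
     neighbour d and gained 0), so the graph is d-degenerate: the largest
     vertex of any subgraph has degree at most d there.
   - Every vertex except the last one has degree > d (the twist raises the
     degree of 0 from d to d+1), so alpha_d <= 1.
   - The two "end" separations ({0..d+1}, {2..N-1}) and
     ({N-d-1..N-1}, {0..N-2}) have order d and are independent, so
     flap_d >= 2.
   The file first proves three general facts (a degeneracy criterion from a
   vertex ordering, a bound on alpha_d by the number of low-degree vertices,
   and flap_d >= 2 from two independent separations), then the properties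
   of the twisted path power, and derives the theorem with N = n + 2d + 3. *)

Lemma card_le_interval N (S : {set 'I_N}) lo k :
  (forall u, u \in S -> lo <= u < lo + k) -> #|S| <= k.
Proof.
move=> inS; rewrite cardE -(size_map val) -(size_iota lo k).
apply: uniq_leq_size; first by rewrite map_inj_uniq ?enum_uniq //; exact: val_inj.
by move=> m /mapP [u]; rewrite mem_enum => uS ->; rewrite mem_iota; exact: inS.
Qed.

Lemma card_ge_seq N (S : {set 'I_N}) (s : seq nat) :
  uniq s -> (forall m, m \in s -> m < N) ->
  (forall m (hm : m < N), m \in s -> Ordinal hm \in S) -> size s <= #|S|.
Proof.
move=> us sN sS; rewrite cardE -(size_map val).
apply: uniq_leq_size => // m ms.
by apply/mapP; exists (Ordinal (sN m ms)); rewrite ?mem_enum ?sS.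
Qed.

Section GeneralFacts.
Context {T : finType}.
Implicit Types (e : rel T) (d : nat).

(* If the vertices can be ranked so that every vertex has at most d
   neighbours of rank at most its own, the graph is d-degenerate: in any
   subgraph, a vertex of maximal rank has degree at most d. *)
Lemma degenerate_of_ranking e d (r : T -> nat) :
  (forall v, #|[set u | (r u <= r v) && e v u]| <= d) -> degenerate e d.
Proof.
move=> back_deg S f _ fe /set0Pn [v0 v0S].
have [v vS vmax] := @arg_maxnP _ v0 (mem S) r v0S.
exists v => //; apply: leq_trans (back_deg v); apply: subset_leq_card.
apply/subsetP => u; rewrite !inE => /andP [uS /fe ->].
by rewrite andbT; exact: (vmax u uS).
Qed.

Lemma alpha_d_le_low_degree e d : alpha_d e d <= #|[set v | deg e v <= d]|.
Proof.
apply/bigmax_leqP => I /andP [_ /forallP low_deg].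
apply: subset_leq_card; apply/subsetP => v vI.
by rewrite inE; exact: implyP (low_deg v) vI.
Qed.

(* Two separations of order at most d with nonempty first sides, each of
   whose first side lies in the other's second side, witness flap_d >= 2;
   they are distinct since a separation (A, B) with A \subset B has an
   empty A :\: B. *)
Lemma flap_d_ge2 e d (s t : {set T} * {set T}) :
  separation e s -> separation e t -> sep_order s <= d -> sep_order t <= d ->
  s.1 :\: s.2 != set0 -> t.1 :\: t.2 != set0 ->
  s.1 \subset t.2 -> t.1 \subset s.2 -> 2 <= flap_d e d.
Proof.
move=> sepS sepT ordS ordT nzS nzT st ts.
have s_neq_t : s != t.
  by apply: contraNneq nzS => s_eq_t; rewrite setD_eq0 {2}s_eq_t.
have -> : 2 = #|[set s; t]| by rewrite cards2 s_neq_t.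
apply: leq_bigmax_cond; apply/andP; split.
  by apply/forall_inP => u /set2P [->|->]; apply/andP.
apply/andP; split; first by apply/forall_inP => u /set2P [->|->].
by apply/forall_inP => u /set2P [->|->]; apply/forall_inP => w /set2P [->|->];
  rewrite ?eqxx //= st ts implybT.
Qed.

End GeneralFacts.

Definition twisted_edge (d i j : nat) : bool :=
  (i < j) && ((j - i <= d) && ~~ ((i == d) && (j == d.+1))
              || (i == 0) && (j == d.+1)).

Definition twisted_graph (d N : nat) : rel 'I_N :=
  fun x y => twisted_edge d x y || twisted_edge d y x.

Section TwistedGraph.
Variables d N : nat.

Let G := twisted_graph d N.

Lemma twisted_simple : simple_graph G.
Proof.
split; first by move=> x y; rewrite /G /twisted_graph orbC.
by move=> x; rewrite /G /twisted_graph /twisted_edge; apply/negP; lia.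
Qed.

(* d >= 1 lets the added edge {0, d+1} respect the degeneracy bound;
   d >= 2 keeps vertex d, which lost a neighbour, of degree 2d - 1 > d. *)
Hypothesis d_ge2 : 2 <= d.

(* The neighbours of v below v lie in [v - d, v), or in [0, d) for
   v = d + 1; so there are at most d of them. *)
Lemma twisted_back_degree (v : 'I_N) :
  #|[set u : 'I_N | (u <= v) && G v u]| <= d.
Proof.
apply: (@card_le_interval _ _ (if v == d.+1 :> nat then 0 else v - d)) => u.
rewrite inE /G /twisted_graph /twisted_edge.
by case: ifP => /eqP; lia.
Qed.

Lemma twisted_degenerate : degenerate G d.
Proof. exact: degenerate_of_ranking twisted_back_degree. Qed.

(* From here on the graph is long enough for its two ends to be far apart. *)
Hypothesis N_large : 2 * d + 3 <= N.

(* Every vertex x other than the last one has more than d neighbours: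
   1..d+1 for x = 0; all of [0, x+d] but x for 0 < x < d; 0..d-1 and d+2
   for x in {d, d+1}; and [x-d, x) together with x+1 for larger x. *)
Lemma twisted_high_degree (x : 'I_N) : x != N.-1 :> nat -> d < deg G x.
Proof.
case: x => x xN /= x_not_last; rewrite /deg /deg_in /G.
have [x0 | x_pos] := eqVneq x 0.
  apply: leq_trans (_ : size (iota 1 d.+1) <= _); first by rewrite size_iota.
  apply: card_ge_seq; first exact: iota_uniq.
    by move=> m; rewrite mem_iota; lia.
  by move=> m hm; rewrite mem_iota !inE /twisted_graph /twisted_edge /= x0; lia.
have [x_small | x_ged] := ltnP x d.
  apply: leq_trans (_ : size (rem x (iota 0 (x + d + 1))) <= _).
    by rewrite size_rem ?size_iota ?mem_iota; lia.
  apply: card_ge_seq; first by apply: rem_uniq; exact: iota_uniq.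
    by move=> m; rewrite mem_rem_uniq ?iota_uniq // inE mem_iota; lia.
  move=> m hm; rewrite mem_rem_uniq ?iota_uniq // !inE mem_iota.
  by rewrite /twisted_graph /twisted_edge /=; lia.
have [x_mid | x_high] := leqP x d.+1.
  apply: leq_trans (_ : size (d.+2 :: iota 0 d) <= _); first by rewrite /= size_iota.
  apply: card_ge_seq.
  - by rewrite /= iota_uniq mem_iota andbT; lia.
  - by move=> m; rewrite inE mem_iota; lia.
  by move=> m hm; rewrite !inE mem_iota /twisted_graph /twisted_edge /=; lia.
apply: leq_trans (_ : size (x.+1 :: iota (x - d) d) <= _); first by rewrite /= size_iota.
apply: card_ge_seq.
- by rewrite /= iota_uniq mem_iota andbT; lia.
- by move=> m; rewrite inE mem_iota; lia.
by move=> m hm; rewrite !inE mem_iota /twisted_graph /twisted_edge /=; lia.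
Qed.

Lemma twisted_alpha_d : alpha_d G d <= 1.
Proof.
apply: leq_trans (alpha_d_le_low_degree G d) _.
apply: (@card_le_interval _ _ N.-1) => u; rewrite inE => low.
have [-> | not_last] := eqVneq (u : nat) N.-1; first by lia.
by move: (twisted_high_degree u not_last); rewrite ltnNge low.
Qed.

(* The separations cutting off {0, 1} and {N-1} respectively. *)
Definition left_sep : {set 'I_N} * {set 'I_N} :=
  ([set u : 'I_N | u <= d.+1], [set u : 'I_N | 2 <= u]).

Definition right_sep : {set 'I_N} * {set 'I_N} :=
  ([set u : 'I_N | N - d.+1 <= u], [set u : 'I_N | u <= N - 2]).

Lemma separation_left_sep : separation G left_sep.
Proof.
apply/andP; split; first by apply/eqP/setP => u; rewrite !inE; lia.
apply/forall_inP => x; rewrite !inE => hx.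
apply/forall_inP => y; rewrite !inE => hy.
by rewrite /G /twisted_graph /twisted_edge; lia.
Qed.

Lemma separation_right_sep : separation G right_sep.
Proof.
apply/andP; split; first by apply/eqP/setP => u; rewrite !inE; lia.
apply/forall_inP => x; rewrite !inE => hx.
apply/forall_inP => y; rewrite !inE => hy.
by have := ltn_ord x; rewrite /G /twisted_graph /twisted_edge; lia.
Qed.

Lemma twisted_flap_d : 2 <= flap_d G d.
Proof.
have N_pos : 0 < N by lia.
have last_lt : N.-1 < N by lia.
apply: (@flap_d_ge2 _ _ _ left_sep right_sep).
- exact: separation_left_sep.
- exact: separation_right_sep.
- by apply: (@card_le_interval _ _ 2) => u; rewrite !inE; lia.
- by apply: (@card_le_interval _ _ (N - d.+1)) => u; rewrite !inE; lia.
- by apply/set0Pn; exists (Ordinal N_pos); rewrite !inE.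
- by apply/set0Pn; exists (Ordinal last_lt); rewrite !inE /=; lia.
- by apply/subsetP => u; rewrite !inE; lia.
by apply/subsetP => u; rewrite !inE; lia.
Qed.

End TwistedGraph.

Theorem mainTheorem7 :
  forall d : nat, 2 <= d ->
  forall n : nat, exists (T : finType) (e : rel T),
    [/\ simple_graph e, n < #|T|, degenerate e d & alpha_d e d < flap_d e d].
Proof.
move=> d d_ge2 n.
pose N := n + 2 * d + 3.
have N_large : 2 * d + 3 <= N by rewrite /N; lia.
exists ('I_N : finType), (twisted_graph d N); split.
- exact: twisted_simple.
- by rewrite card_ord /N; lia.
- exact: twisted_degenerate.
apply: leq_ltn_trans (@twisted_alpha_d d N d_ge2 N_large) _.
exact: twisted_flap_d.
Qed.
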